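(* Let $n\ge 2$, let $\Sigma^*$ be an $n\times n$ positive definite matrix with $\Omega^*=(\Sigma^* )^{-1}$, whose conditional independence structure is a tree $T^*$ on $\{1,\dots,n\}$. Let $D^*$ be a diagonal matrix with nonnegative diagonal entries such that $D^*_{ii}>0$ whenever $i$ is a neighbor (in $T^*$) of a leaf of $T^*$, and let $\Sigma^o=\Sigma^*+D^*$. Then for every tree $T^q\in\mathcal{T}_{T^*}$ there exist an $n\times n$ positive definite matrix $\Sigma^q$ whose conditional independence structure is $T^q$ and a diagonal matrix $D^q$ with nonnegative diagonal entries such that $\Sigma^o=\Sigma^q+D^q$.
   Context: For an $n\times n$ positive definite (covariance) matrix $\Sigma$ with inverse $\Omega=\Sigma^{-1}$, its conditional independence structure is the graph on vertex set $\{1,\dots,n\}$ with an edge $\{i,j\}$ ($i\neq j$) if and only if $\Omega_{ij}\neq 0$; ''the structure of $\Sigma$ is the tree $T$'' means this graph equals $T$. Let $\mathcal{L}$ be the set of leaves of $T^*$. For a subset $\mathcal{S}\subseteq\mathcal{L}$ in which no two leaves share a common neighbor, let $T^{\mathcal{S}}$ be the tree obtained from $T^*$ by exchanging the position of each leaf $a\in\mathcal{S}$ with its unique neighbor $b$ (i.e. the image of $T^*$ under the permutation of vertex labels that swaps each such $a$ with its neighbor $b$). $\mathcal{T}_{T^*}$ is the set of all trees $T^{\mathcal{S}}$ for all such subsets $\mathcal{S}$. *)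

From HB Require Import structures.
From mathcomp Require Import all_boot all_order all_algebra all_fingroup.
From mathcomp Require Import all_classical all_reals.
Set Implicit Arguments. Unset Strict Implicit. Unset Printing Implicit Defensive.
Import Order.TTheory GRing.Theory Num.Theory.
Local Open Scope ring_scope.

Definition simple_graph n (G : rel 'I_n) : Prop :=
  (forall i j, G i j = G j i) /\ (forall i, ~~ G i i).

Definition has_cycle n (G : rel 'I_n) : Prop :=
  exists (x : 'I_n) (p : seq 'I_n),
    [/\ path G x p, uniq (x :: p), (2 <= size p)%N & G (last x p) x].

Definition is_tree n (G : rel 'I_n) : Prop :=
  [/\ simple_graph G, (forall i j, connect G i j) & ~ has_cycle G].

Definition posdef (R : realType) n (S : 'M[R]_n) : Prop :=
  S^T = S /\ (forall x : 'cV[R]_n, x != 0 -> 0 < (x^T *m S *m x) ord0 ord0).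

(* The conditional independence structure of S is the graph G:
   {i,j} (i<>j) is an edge iff (S^{-1})_ij <> 0. *)
Definition structure_is (R : realType) n (S : 'M[R]_n) (G : rel 'I_n) : Prop :=
  forall i j : 'I_n, i != j -> (G i j <-> invmx S i j != 0).

Definition nonneg_diag (R : realType) n (D : 'M[R]_n) : Prop :=
  is_diag_mx D /\ (forall i, 0 <= D i i).

Definition is_leaf n (G : rel 'I_n) (a : 'I_n) : bool :=
  #|[set j | G a j]| == 1%N.

Definition perm_graph n (s : {perm 'I_n}) (G : rel 'I_n) : rel 'I_n :=
  fun x y => G ((s^-1)%g x) ((s^-1)%g y).

(* T^S for an admissible S: the image of T under the permutation that swaps
   each leaf a in S with its (unique) neighbour and fixes every other vertex. *)
Definition admissible_leaf_set n (T : rel 'I_n) (S : {set 'I_n}) : Prop :=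
  (forall a, a \in S -> is_leaf T a) /\
  (forall a a' c, a \in S -> a' \in S -> a != a' -> ~ (T a c && T a' c)).

Definition swap_perm n (T : rel 'I_n) (S : {set 'I_n}) (s : {perm 'I_n}) : Prop :=
  (forall a b, a \in S -> T a b -> s a = b /\ s b = a) /\
  (forall x, x \notin S -> (forall a, a \in S -> ~~ T a x) -> s x = x).

Definition leaf_swap_family n (T : rel 'I_n) (Tq : rel 'I_n) : Prop :=
  exists (S : {set 'I_n}) (s : {perm 'I_n}),
    [/\ admissible_leaf_set T S, swap_perm T S s &
        forall x y, Tq x y = perm_graph s T x y].

From HB Require Import structures.
From mathcomp Require Import all_boot all_order all_algebra all_fingroup.
From mathcomp Require Import all_classical all_reals.
From mathcomp Require Import ring.
Import Order.TTheory GRing.Theory Num.Theory.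
Local Open Scope ring_scope.
Set Implicit Arguments. Unset Strict Implicit. Unset Printing Implicit Defensive.

(* Write O for the inverse of S*. If a is a leaf of T* with neighbour b, row a
   of O is supported on {a, b}, so X_a = r X_b + e with r = - O_ab / O_aa and e
   independent of the other coordinates, of variance 1 / O_aa.  Replace X_a by
   X'_a = r X_b and X_b by X'_b = X_b + h, with h independent noise of variance
   d_b = D*_bb > 0.  The covariance S' of X' agrees with S* off the diagonal,
   S'_aa = S*_aa - 1 / O_aa and S'_bb = S*_bb + d_b, so S* + D* = S' + D' with
   D' diagonal and nonnegative.  In X' the vertex a carries all the edges of b
   and b hangs off a: the inverse of S' is computed explicitly and is O with a
   and b exchanged, up to nonzero rescaling.  S' is positive definite because a
   vector killed by the linear map X -> X' is detected by the noise h.  All the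
   leaves in the swapped set are treated at once. *)

Lemma sumr_supp1 (V : nmodType) (I : finType) (p : I) (F : I -> V) :
  (forall k, k != p -> F k = 0) -> \sum_k F k = F p.
Proof. by move=> F0; rewrite (bigD1 p) //= big1 ?addr0. Qed.

Lemma sumr_supp2 (V : nmodType) (I : finType) (p q : I) (F : I -> V) :
  p != q -> (forall k, k != p -> k != q -> F k = 0) -> \sum_k F k = F p + F q.
Proof.
move=> pq F0; rewrite (bigD1 p) //= (bigD1 q) 1?eq_sym //= big1 ?addr0 //.
by move=> k /andP[kq kp]; apply: F0.
Qed.

Lemma mulmx1_invmx (R : comUnitRingType) n (K B : 'M[R]_n) :
  K *m B = 1%:M -> invmx B = K.
Proof.
move=> KB; have [_ Bu] := mulmx1_unit KB.
by rewrite -[LHS]mul1mx -KB -mulmxA mulmxV // mulmx1.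
Qed.

Lemma monomial_conj_mulmx1 (R : fieldType) n (K B : 'M[R]_n)
    (s : {perm 'I_n}) (c : 'I_n -> R) :
  (forall i, c i != 0) -> K *m B = 1%:M ->
  \matrix_(i, j) (K (s i) (s j) / (c i * c j)) *m
    \matrix_(i, j) (c i * c j * B (s i) (s j)) = 1%:M.
Proof.
move=> c0 KB; apply/matrixP => i j; rewrite !mxE.
transitivity (c j / c i * \sum_k K (s i) k * B k (s j)).
  rewrite [in RHS](reindex_inj (@perm_inj _ s)) mulr_sumr; apply: eq_bigr => k _.
  by rewrite !mxE; field; rewrite !c0.
have /matrixP /(_ (s i) (s j)) := KB; rewrite !mxE (inj_eq (@perm_inj _ s)) => ->.
by have [->|] := eqVneq i j; rewrite ?mulr1 ?divff ?mulr0.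
Qed.

Lemma quad_diag_mx (R : comPzSemiRingType) n (w : 'rV[R]_n) (x : 'cV[R]_n) :
  (x^T *m diag_mx w *m x) 0 0 = \sum_k w 0 k * x k 0 ^+ 2.
Proof.
rewrite mxE; apply: eq_bigr => k _; rewrite mxE (sumr_supp1 (p := k)).
  by rewrite !mxE eqxx mulr1n; ring.
by move=> l lk; rewrite !mxE (negbTE lk) mulr0n mulr0.
Qed.

Lemma posdef_unit (R : realType) n (S : 'M[R]_n) : posdef S -> S \in unitmx.
Proof.
case=> _ Spos; rewrite unitmxE unitfE; apply/negP => /det0P [v v0 vS].
have := Spos v^T; rewrite trmx_eq0 v0 trmxK vS mul0mx mxE => /(_ isT).
by rewrite ltxx.
Qed.

Lemma posdef_invmx_diag_gt0 (R : realType) n (S : 'M[R]_n) i :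
  posdef S -> 0 < invmx S i i.
Proof.
move=> pS; have Su := posdef_unit pS; case: pS => Ssym Spos.
pose e : 'cV[R]_n := delta_mx i 0; pose w := invmx S *m e.
have w0 : w != 0.
  apply/eqP => w0; have /matrixP /(_ i 0) : S *m w = e.
    by rewrite mulmxA mulmxV // mul1mx.
  by rewrite w0 mulmx0 !mxE !eqxx => /eqP; rewrite eq_sym oner_eq0.
suff -> : invmx S i i = (w^T *m S *m w) 0 0 by exact: Spos.
by rewrite /w trmx_mul trmx_inv Ssym !mulmxA mulmxKV // trmx_delta -rowE -colE !mxE.
Qed.

Section LeafSwap.

Variables (R : realType) (n : nat) (S D : 'M[R]_n).
Hypothesis S_pd : posdef S.
Hypothesis D_nnd : nonneg_diag D.
Variables (L : {set 'I_n}) (s : {perm 'I_n}).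
Hypothesis s_inv : involutive s.
Hypothesis s_L : forall a, a \in L -> s a \notin L.
Hypothesis s_fix : forall x, x \notin L -> s x \notin L -> s x = x.

Local Notation O := (invmx S).
Local Notation d i := (D i i).

Hypothesis O_leaf_row : forall a k, a \in L -> k != a -> k != s a -> O a k = 0.
Hypothesis O_leaf_edge : forall a, a \in L -> O a (s a) != 0.
Hypothesis d_nbr_gt0 : forall a, a \in L -> 0 < d (s a).

Lemma S_symE i j : S i j = S j i.
Proof. by rewrite -{1}S_pd.1 mxE. Qed.

Lemma O_symE i j : O i j = O j i.
Proof. by rewrite -{1}S_pd.1 -trmx_inv mxE. Qed.

Lemma O_mulS i j : \sum_k O i k * S k j = (i == j)%:R.
Proof.
by have /matrixP /(_ i j) := mulVmx (posdef_unit S_pd); rewrite !mxE.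
Qed.

Lemma O_diag_neq0 i : O i i != 0.
Proof. by rewrite lt0r_neq0 // posdef_invmx_diag_gt0. Qed.

Lemma leaf_nbr_neq a : a \in L -> s a != a.
Proof. by move=> aL; apply: contraNneq (s_L aL) => ->. Qed.

Lemma O_leaf_mulS a j : a \in L ->
  O a a * S a j + O a (s a) * S (s a) j = (a == j)%:R.
Proof.
move=> aL; have asa : a != s a by rewrite eq_sym leaf_nbr_neq.
by rewrite -O_mulS (sumr_supp2 asa) // => k ka ksa; rewrite O_leaf_row ?mul0r.
Qed.

Definition regr a := - O a (s a) / O a a.

Lemma S_leaf_row a j : a \in L -> j != a -> S a j = regr a * S (s a) j.
Proof.
move=> aL ja; have := O_leaf_mulS j aL; rewrite eq_sym (negbTE ja).
move/eqP; rewrite addr_eq0 => /eqP Oa.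
by rewrite /regr -[S a j](mulKf (O_diag_neq0 a)) Oa; ring.
Qed.

Lemma S_leaf_diag a : a \in L -> S a a = regr a ^+ 2 * S (s a) (s a) + (O a a)^-1.
Proof.
move=> aL; have := O_leaf_mulS a aL; rewrite eqxx mulr1n => Oa.
have -> : S a a = (O a a)^-1 * (1 - O a (s a) * S (s a) a).
  by rewrite -Oa addrK mulKf // O_diag_neq0.
rewrite S_symE S_leaf_row ?leaf_nbr_neq // /regr.
by field; rewrite O_diag_neq0.
Qed.

Definition src x := if x \in L then s x else x.
Definition scale x := if x \in L then regr x else 1.
Definition leaf_noise u := if u \in L then d (s u) else 0.

Lemma src_notin x : src x \notin L.
Proof. by rewrite /src; case: ifP => [/s_L|->]. Qed.

Lemma src_perm x : src (s x) = src x.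
Proof.
rewrite /src; have [xL|xL] := boolP (x \in L); first by rewrite (negbTE (s_L xL)).
by case: ifP => [_|/negbT sxL]; rewrite ?s_inv // s_fix.
Qed.

Lemma eq_src x y : x \notin L ->
  (x == src y) = (x == y) || (y \in L) && (s y == x).
Proof.
move=> xL; rewrite /src; case: ifP => yL /=; last by rewrite orbF.
have -> : (x == y) = false by apply: contraNF xL => /eqP ->.
by rewrite eq_sym.
Qed.

Lemma d_nbr_neq0 a : a \in L -> d (s a) != 0.
Proof. by move/d_nbr_gt0/lt0r_neq0. Qed.

Lemma scale_neq0 x : scale x != 0.
Proof.
rewrite /scale /regr; case: ifP => xL; last exact: oner_neq0.
by rewrite mulf_neq0 ?oppr_eq0 ?invr_eq0 ?O_leaf_edge ?O_diag_neq0.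
Qed.

(* [Ssrc] is the covariance of the vector whose u-th entry is X_(src u), plus
   independent noise of variance d (s u) when u is in L; [Osrc] is its
   inverse.  [Sswap] relabels [Ssrc] by s and rescales entry i by [scale i]. *)
Definition Ssrc := \matrix_(u, v) (S (src u) (src v) + (u == v)%:R * leaf_noise u).

Definition Osrc := \matrix_(u, v)
  (if u \in L then
     (if v == u then (d (s u))^-1 else if v == s u then - (d (s u))^-1 else 0)
   else if v \in L then (if u == s v then - (d (s v))^-1 else 0)
   else O u v + (if (u == v) && (s u \in L)
                 then (d u)^-1 - O (s u) u ^+ 2 / O (s u) (s u) else 0)).

Lemma Osrc_Ssrc_leaf u j : u \in L -> \sum_k Osrc u k * Ssrc k j = (u == j)%:R.
Proof.
move=> uL; have us : u != s u by rewrite eq_sym leaf_nbr_neq.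
rewrite (sumr_supp2 us); last by move=> k ku ksu; rewrite mxE uL (negbTE ku) (negbTE ksu) mul0r.
rewrite !mxE uL eqxx (negbTE (leaf_nbr_neq uL)) eqxx src_perm.
rewrite /leaf_noise uL (negbTE (s_L uL)) mulr0 addr0.
by field; rewrite d_nbr_neq0.
Qed.

Lemma Osrc_Ssrc_inner u j : u \notin L -> s u \notin L ->
  \sum_k Osrc u k * Ssrc k j = (u == j)%:R.
Proof.
move=> uL suL; transitivity (\sum_k O u k * S k (src j)).
  apply: eq_bigr => k _; rewrite !mxE (negbTE uL).
  have [kL|kL] := boolP (k \in L).
    have uk : u != s k by apply: contraNneq suL => ->; rewrite s_inv.
    rewrite (negbTE uk) O_symE O_leaf_row ?mul0r ?mulr0 //.
    by apply: contraNneq uL => ->.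
  by rewrite (negbTE suL) andbF addr0 /src (negbTE kL) /leaf_noise (negbTE kL) mulr0 addr0.
rewrite O_mulS eq_src //; have [jL|_] := boolP (j \in L); last by rewrite /= orbF.
have -> : (s j == u) = false by apply: contraNF suL => /eqP <-; rewrite s_inv.
by rewrite orbF.
Qed.

Lemma Osrc_Ssrc_nbr a j : a \in L -> \sum_k Osrc (s a) k * Ssrc k j = (s a == j)%:R.
Proof.
move=> aL; have saL := s_L aL; have sa := leaf_nbr_neq aL.
have -> : \sum_k Osrc (s a) k * Ssrc k j =
    \sum_k (Osrc (s a) k * Ssrc k j - O (s a) k * S k (src j)) + (s a == src j)%:R.
  by rewrite sumrB O_mulS subrK.
(* Row [s a] of [Osrc] differs from row [s a] of [O] in columns [s a] and [a] only. *)
rewrite (sumr_supp2 sa); last first.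
  move=> k ka ksa; rewrite !mxE (negbTE saL).
  have [kL|kL] := boolP (k \in L).
    have sak : s a != s k by rewrite (inj_eq perm_inj) eq_sym.
    have -> : O (s a) k = 0 by rewrite O_symE O_leaf_row // eq_sym.
    by rewrite (negbTE sak) !mul0r subrr.
  rewrite (eq_sym (s a) k) (negbTE ka) addr0 /src (negbTE kL).
  by rewrite /leaf_noise (negbTE kL) mulr0 addr0 subrr.
have srca : src a = s a by rewrite /src aL.
rewrite !mxE (negbTE saL) aL s_inv aL !eqxx /= src_perm srca.
rewrite /leaf_noise (negbTE saL) aL mulr0 addr0.
rewrite (S_leaf_row aL); last by apply: contraNneq (src_notin j) => ->.
rewrite /regr (O_symE (s a) a) eq_src // (inj_eq perm_inj).
have d0 := d_nbr_neq0 aL; have Oa0 := O_diag_neq0 a.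
have [<-|aj] := eqVneq a j; last first.
  by rewrite andbF orbF mulr0n mul0r addr0; field; rewrite d0 Oa0.
by rewrite (negbTE sa) aL /= !mulr1n mulr0n; field; rewrite d0 Oa0.
Qed.

Lemma Osrc_mul_Ssrc : Osrc *m Ssrc = 1%:M.
Proof.
apply/matrixP => u j; rewrite [LHS]mxE [RHS]mxE.
have [uL|uL] := boolP (u \in L); first exact: Osrc_Ssrc_leaf.
have [suL|suL] := boolP (s u \in L); last exact: Osrc_Ssrc_inner.
by rewrite -(s_inv u) Osrc_Ssrc_nbr.
Qed.

Lemma Osrc_neq0 u v : u != v -> (Osrc u v != 0) = (O u v != 0).
Proof.
move=> uv; rewrite mxE (eq_sym v u) (negbTE uv).
have [uL|uL] := boolP (u \in L).
  have [->|vs] := eqVneq v (s u); first by rewrite oppr_eq0 invr_eq0 d_nbr_neq0 ?O_leaf_edge.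
  by rewrite O_leaf_row // eq_sym.
have [vL|vL] := boolP (v \in L); last by rewrite andFb addr0.
have [->|us] := eqVneq u (s v); first by rewrite oppr_eq0 invr_eq0 d_nbr_neq0 // O_symE O_leaf_edge.
by rewrite O_symE O_leaf_row.
Qed.

Definition Sswap := \matrix_(i, j) (scale i * scale j * Ssrc (s i) (s j)).

Lemma invmx_Sswap_neq0 i j : i != j -> (invmx Sswap i j != 0) = (O (s i) (s j) != 0).
Proof.
move=> ij; have := monomial_conj_mulmx1 s scale_neq0 Osrc_mul_Ssrc.
move/mulmx1_invmx => ->; rewrite mxE mulf_eq0 invr_eq0 mulf_eq0 !(negbTE (scale_neq0 _)).
by rewrite !orbF Osrc_neq0 // (inj_eq perm_inj).
Qed.

Lemma Sswap_entry i j : Sswap i j =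
  scale i * scale j * S (src i) (src j) + (i == j)%:R * leaf_noise (s i).
Proof.
rewrite !mxE !src_perm (inj_eq perm_inj) mulrDr; congr (_ + _).
have [<-|] := eqVneq i j; last by rewrite !mul0r mulr0.
rewrite /scale /leaf_noise; have [iL|iL] := boolP (i \in L).
  by rewrite (negbTE (s_L iL)) !mulr0.
by rewrite /= !mul1r.
Qed.

Lemma scale_S_src i w : (i \in L -> w != i) -> scale i * S (src i) w = S i w.
Proof.
rewrite /scale /src; case: ifP => iL wi; last by rewrite mul1r.
by rewrite (S_leaf_row iL (wi isT)).
Qed.

Lemma Sswap_offdiag i j : i != j -> Sswap i j = S i j.
Proof.
move=> ij; rewrite Sswap_entry (negbTE ij) mul0r addr0 mulrAC scale_S_src; last first.
  by move=> iL; apply: contraNneq (src_notin j) => ->.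
by rewrite mulrC S_symE scale_S_src //; exact: S_symE.
Qed.

Lemma Sswap_diag i : Sswap i i =
  S i i + (if i \in L then - (O i i)^-1 else if s i \in L then d i else 0).
Proof.
rewrite Sswap_entry eqxx mulr1n mul1r /scale /src /leaf_noise.
have [iL|iL] := boolP (i \in L).
  by rewrite (negbTE (s_L iL)) addr0 [in RHS](S_leaf_diag iL); ring.
by case: ifP => _; rewrite ?s_inv; ring.
Qed.

Lemma Sswap_sym : Sswap^T = Sswap.
Proof.
apply/matrixP => i j; rewrite mxE.
have [->//|ji] := eqVneq j i; have ij : i != j by rewrite eq_sym.
by rewrite (Sswap_offdiag ji) (Sswap_offdiag ij) S_symE.
Qed.

Definition src_mx := \matrix_(i, k) ((k == src i)%:R * scale i).

Lemma Sswap_congr :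
  Sswap = src_mx *m S *m src_mx^T + diag_mx (\row_i leaf_noise (s i)).
Proof.
apply/matrixP => i j; rewrite Sswap_entry !mxE mulr_natl; congr (_ + _).
rewrite (sumr_supp1 (p := src j)); last by move=> l lj; rewrite !mxE (negbTE lj) mul0r mulr0.
rewrite mxE (sumr_supp1 (p := src i)); last by move=> k ki; rewrite !mxE (negbTE ki) !mul0r.
by rewrite !mxE !eqxx !mulr1n; ring.
Qed.

Lemma src_mx_tr_coord (x : 'cV[R]_n) k : (src_mx^T *m x) k 0 =
  (if k \in L then 0 else x k 0) + (if s k \in L then scale (s k) * x (s k) 0 else 0).
Proof.
rewrite mxE; have [kL|kL] := boolP (k \in L).
  rewrite big1 ?(negbTE (s_L kL)) ?addr0 // => i _; rewrite !mxE.
  have -> : (k == src i) = false by apply: contraTF kL => /eqP ->; exact: src_notin.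
  by rewrite !mul0r.
have src_k i : (k == src i) = (i == k) || (i == s k) && (s k \in L).
  rewrite eq_src // eq_sym (canF_eq s_inv).
  by have [->|_] := eqVneq i (s k); rewrite /= ?andbT ?andbF.
have scale_k : scale k = 1 by rewrite /scale (negbTE kL).
have [skL|skL] := boolP (s k \in L).
  have ksk : k != s k by apply: contraNneq kL => ->.
  rewrite (sumr_supp2 ksk) => [|i ik isk]; last by rewrite !mxE src_k (negbTE ik) (negbTE isk) !mul0r.
  by rewrite !mxE !src_k eqxx (eq_sym (s k)) (negbTE ksk) skL scale_k /= eqxx mulr1n; ring.
rewrite (sumr_supp1 (p := k)) => [|i ik]; last by rewrite !mxE src_k (negbTE ik) (negbTE skL) andbF !mul0r.
by rewrite !mxE src_k eqxx scale_k /= mulr1n; ring.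
Qed.

Lemma src_mx_tr_eq0 (x : 'cV[R]_n) :
  (forall k, s k \in L -> x k 0 = 0) -> src_mx^T *m x = 0 -> x = 0.
Proof.
move=> x_nbr Ax; apply/matrixP => k l; rewrite (ord1 l) [RHS]mxE.
have Ax0 j : (src_mx^T *m x) j 0 = 0 by rewrite Ax mxE.
have [skL|skL] := boolP (s k \in L); first exact: x_nbr.
have [kL|kL] := boolP (k \in L); last first.
  by have := Ax0 k; rewrite src_mx_tr_coord (negbTE kL) (negbTE skL) addr0.
have := Ax0 (s k); rewrite src_mx_tr_coord s_inv kL (negbTE skL) x_nbr ?s_inv //.
by rewrite add0r => /eqP; rewrite mulf_eq0 (negbTE (scale_neq0 k)) => /eqP.
Qed.

Lemma leaf_noise_ge0 u : 0 <= leaf_noise u.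
Proof. by rewrite /leaf_noise; case: ifP => // /d_nbr_gt0/ltW. Qed.

Lemma Sswap_pos (x : 'cV[R]_n) : x != 0 -> 0 < (x^T *m Sswap *m x) 0 0.
Proof.
move=> x0; rewrite Sswap_congr mulmxDr mulmxDl mxE quad_diag_mx.
have -> : x^T *m (src_mx *m S *m src_mx^T) *m x =
    (src_mx^T *m x)^T *m S *m (src_mx^T *m x) by rewrite trmx_mul trmxK !mulmxA.
have noise_ge0 k : 0 <= (\row_i leaf_noise (s i)) 0 k * x k 0 ^+ 2.
  by rewrite mxE mulr_ge0 ?sqr_ge0 ?leaf_noise_ge0.
have [y0|y0] := eqVneq (src_mx^T *m x) 0; last first.
  by apply: ltr_wpDr (sumr_ge0 _ (fun k _ => noise_ge0 k)) (S_pd.2 _ y0).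
have [k /andP [skL xk]] : exists k, (s k \in L) && (x k 0 != 0).
  apply/existsP; apply: contraNT x0 => /existsPn x_nbr.
  apply/eqP/src_mx_tr_eq0 => // k skL.
  by move: (x_nbr k); rewrite skL /= negbK => /eqP.
rewrite y0 mulmx0 mxE add0r (bigD1 k) //=.
apply: ltr_wpDr (sumr_ge0 _ (fun k _ => noise_ge0 k)) _.
have := d_nbr_gt0 skL; rewrite s_inv => dk.
by rewrite mxE /leaf_noise skL s_inv mulr_gt0 // lt0r sqrf_eq0 xk sqr_ge0.
Qed.

Lemma Sswap_posdef : posdef Sswap.
Proof. by split; [exact: Sswap_sym | exact: Sswap_pos]. Qed.

Lemma leaf_swap_cov : exists Sq : 'M[R]_n, [/\ posdef Sq,
  forall i j, i != j -> (invmx Sq i j != 0) = (O (s i) (s j) != 0)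
  & nonneg_diag (S + D - Sq)].
Proof.
case: D_nnd => D_diag D_ge0.
have Dq_entry i j : (S + D - Sswap) i j = S i j + D i j - Sswap i j by rewrite !mxE.
exists Sswap; split; [exact: Sswap_posdef | exact: invmx_Sswap_neq0 | split].
  apply/is_diag_mxP => i j ij; rewrite Dq_entry Sswap_offdiag //.
  by rewrite (is_diag_mxP D_diag) // addr0 subrr.
move=> i; rewrite Dq_entry Sswap_diag opprD addrACA subrr add0r.
case: ifP => iL; first by rewrite opprK addr_ge0 // invr_ge0 ltW ?posdef_invmx_diag_gt0.
by case: ifP => _; rewrite ?subrr ?subr0.
Qed.

End LeafSwap.

Section LeafSwapPerm.

Variables (n : nat) (T : rel 'I_n) (S0 : {set 'I_n}) (s : {perm 'I_n}).
Hypothesis T_irr : forall i, ~~ T i i.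
Hypothesis S0_leaf : forall a, a \in S0 -> is_leaf T a.
Hypothesis s_swap : swap_perm T S0 s.

Lemma swap_leaf_nbr a : a \in S0 ->
  [/\ T a (s a), s (s a) = a & forall k, T a k -> k = s a].
Proof.
move=> aS; have /cards1P [b Nb] := S0_leaf aS.
have : b \in [set j | T a j] by rewrite Nb set11.
rewrite inE => Tab; have [-> sb] := s_swap.1 a b aS Tab.
split=> // k Tak; have : k \in [set j | T a j] by rewrite inE.
by rewrite Nb inE => /eqP.
Qed.

Lemma swap_leaf_moved a : a \in S0 -> s a != a.
Proof.
by move=> /swap_leaf_nbr [Tas _ _]; apply: contraNneq (T_irr a) => e; rewrite -{2}e.
Qed.

Lemma swap_perm_invol : involutive s.
Proof.
move=> x; have [xS|xS] := boolP (x \in S0); first by case: (swap_leaf_nbr xS).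
have [/existsP [a /andP [aS Tax]]|/existsPn nb] := boolP [exists a, (a \in S0) && T a x].
  by have [_ ssa /(_ x Tax) ->] := swap_leaf_nbr aS; rewrite ssa.
have sx : s x = x by apply: s_swap.2 => // a aS; move: (nb a); rewrite aS.
by rewrite !sx.
Qed.

Lemma swap_perm_fix x : x \notin S0 -> s x \notin S0 -> s x = x.
Proof.
move=> xS sxS; apply: s_swap.2 => // a aS; apply: contraNN sxS => Tax.
by have [_ ssa /(_ x Tax) ->] := swap_leaf_nbr aS; rewrite ssa.
Qed.

(* If T is a single edge, both of its vertices may lie in S0: keep one vertex of
   each swapped pair. *)
Definition swap_reps := [set a in S0 | (s a \notin S0) || (a < s a)%N].

Lemma swap_reps_sub a : a \in swap_reps -> a \in S0.
Proof. by rewrite inE => /andP []. Qed.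

Lemma swap_reps_disj a : a \in swap_reps -> s a \notin swap_reps.
Proof.
rewrite !inE swap_perm_invol => /andP [aS a_lt]; apply/negP => /andP [saS sa_lt].
by move: a_lt sa_lt; rewrite aS saS /= => /ltn_trans lt /lt; rewrite ltnn.
Qed.

Lemma swap_reps_fix x : x \notin swap_reps -> s x \notin swap_reps -> s x = x.
Proof.
have cover y : y \in S0 -> (y \in swap_reps) || (s y \in swap_reps).
  move=> yS; rewrite !inE swap_perm_invol yS /=; case: (s y \in S0) => //=.
  by rewrite -neq_ltn; apply: contra_neq (swap_leaf_moved yS) => /val_inj.
move=> xR sxR; apply: swap_perm_fix; apply/negP => /cover;
  by rewrite ?swap_perm_invol (negbTE xR) (negbTE sxR).
Qed.

End LeafSwapPerm.

Theorem theorem1 (R : realType) (n : nat) (Hn : (2 <= n)%N)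
    (Sstar : 'M[R]_n) (Tstar : rel 'I_n) (Dstar : 'M[R]_n) :
  posdef Sstar ->
  is_tree Tstar ->
  structure_is Sstar Tstar ->
  nonneg_diag Dstar ->
  (forall i l : 'I_n, is_leaf Tstar l -> Tstar l i -> 0 < Dstar i i) ->
  forall Tq : rel 'I_n, leaf_swap_family Tstar Tq ->
  exists Sq : 'M[R]_n, exists Dq : 'M[R]_n,
    [/\ posdef Sq, structure_is Sq Tq, nonneg_diag Dq & Sstar + Dstar = Sq + Dq].
Proof.
move=> S_pd [[_ T_irr] _ _] T_str D_nnd D_leaf Tq [S0 [s [[S0_leaf _] s_swap Tq_def]]].
have s_inv := swap_perm_invol S0_leaf s_swap.
pose L := swap_reps S0 s.
have nbr a : a \in L -> [/\ Tstar a (s a), s (s a) = a & forall k, Tstar a k -> k = s a].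
  by move/swap_reps_sub/(swap_leaf_nbr S0_leaf s_swap).
have as_neq a : a \in L -> a != s a.
  by move/swap_reps_sub/(swap_leaf_moved T_irr S0_leaf s_swap); rewrite eq_sym.
have O_row a k : a \in L -> k != a -> k != s a -> invmx Sstar a k = 0.
  move=> aL ka; have [_ _ nbr_uniq] := nbr a aL; apply: contraNeq => Oak.
  by apply/eqP/nbr_uniq; apply/(T_str a k _).2; rewrite // eq_sym.
have O_edge a : a \in L -> invmx Sstar a (s a) != 0.
  by move=> aL; have [Tas _ _] := nbr a aL; apply/(T_str _ _ (as_neq a aL)).1.
have D_nbr a : a \in L -> 0 < Dstar (s a) (s a).
  move=> aL; have [Tas _ _] := nbr a aL.
  exact: D_leaf _ _ (S0_leaf _ (swap_reps_sub aL)) Tas.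
have [Sq [Sq_pd Sq_inv Dq_nnd]] := leaf_swap_cov S_pd D_nnd s_inv
  (swap_reps_disj S0_leaf s_swap) (swap_reps_fix T_irr S0_leaf s_swap) O_row O_edge D_nbr.
exists Sq, (Sstar + Dstar - Sq); split=> //; last by rewrite [RHS]addrC subrK.
move=> i j ij; rewrite Tq_def /perm_graph.
have sV x : (s^-1)%g x = s x by rewrite -{1}(s_inv x) permK.
by rewrite !sV Sq_inv //; apply: T_str; rewrite (inj_eq perm_inj).
Qed.
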